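(* If $\nu\in\left(-1,-\tfrac12\right]$ and $a,b\ge0$, then $$|\mathcal{I}_\nu(a)-\mathcal{I}_\nu(b)|\ge |a-b|\sqrt{\mathcal{I}_\nu'(a)\,\mathcal{I}_\nu'(b)}.$$ Moreover, this inequality holds for every $\nu>-1$ and all $a,b\in\left(0,\sqrt{2(\nu+3)}\right)$.
   Context: For $\nu>-1$ define $\mathcal{I}_\nu:\mathbb{R}\to[1,\infty)$ by $\mathcal{I}_\nu(x)=\sum_{n\ge0}\frac{(1/4)^n}{(\nu+1)_n\, n!}x^{2n}$, where $(a)_n=a(a+1)\cdots(a+n-1)$, $(a)_0=1$. Equivalently $\mathcal{I}_\nu(x)=2^\nu\Gamma(\nu+1)x^{-\nu}I_\nu(x)$ for $x>0$, where $I_\nu$ is the modified Bessel function of the first kind. *)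

From Stdlib Require Import Arith Reals Lra ClassicalEpsilon.
Open Scope R_scope.

Fixpoint poch (a : R) (n : nat) : R :=
  match n with
  | O => 1
  | S k => poch a k * (a + INR k)
  end.

(* n-th coefficient of the series of I_nu in powers of x^2. *)
Definition Icoef (nu : R) (n : nat) : R :=
  (/ 4) ^ n / (poch (nu + 1) n * INR (fact n)).

Definition Ipartial (nu x : R) (N : nat) : R :=
  sum_f_R0 (fun n => Icoef nu n * x ^ (2 * n)) N.

(* I_nu(x) := sum_{n>=0} (1/4)^n / ((nu+1)_n n!) x^(2n), defined as the limit of
   the partial sums (chosen by Hilbert's epsilon; the series converges for every
   real x whenever nu > -1). *)
Definition Inu (nu x : R) : R :=
  epsilon (inhabits 0) (fun l => Un_cv (Ipartial nu x) l).

From Stdlib Require Import Reals.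
Open Scope R_scope.
From Coquelicot Require Import Coquelicot.
From Stdlib Require Import Lra ClassicalEpsilon FunctionalExtensionality.

(* Write I_nu(x) = F(x^2) with F(y) = sum_n c_n y^n, c_n = Icoef nu n.  The
   bound is a consequence of an abstract mean-value inequality: if f' = g > 0
   on [a, b] and 3 g'^2 - 2 g g'' >= 0 there (i.e. g^(-1/2) is convex), then
   f b - f a >= (b - a) sqrt (g a g b)  (sqrt_mean_bound).  For f = I_nu and
   y = x^2 the quantity 3 g'^2 - 2 g g'' equals
     udisc(y) = 12 A^2 - 8 y A^2 + 32 (nu+2) y A B + 48 y^2 B^2,
   A = F', B = F'', once F''' is eliminated with the differential equation
   F'/4 = (nu+2) F'' + y F'''.  Positivity of udisc is clear on [0,1]; beyond
   1 it follows because y^(nu+1) A udisc has derivative y^nu times a cubic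
   form in A, y B with positive coefficients.  Hence the bound holds for every
   nu > -1 and all a, b >= 0, which covers both cases of the theorem. *)

Lemma nondecreasing_of_derive (h dh : R -> R) (a b : R) : a <= b ->
  (forall t, a <= t <= b -> is_derive h t (dh t)) ->
  (forall t, a <= t <= b -> 0 <= dh t) -> h a <= h b.
Proof.
  intros Hab Hd Hpos. destruct (Req_dec a b) as [->|Hne]; [lra|].
  destruct (MVT_cor2 h dh a b ltac:(lra)) as [c [Hc Hcab]].
  { intros c Hc; apply is_derive_Reals, Hd; lra. }
  assert (0 <= dh c) by (apply Hpos; lra). nra.
Qed.

(* Proof: psi t = (f t - f a) / sqrt (g t) - (t - a) sqrt (g a) vanishes at a,
   its derivative dpsi vanishes at a too, and the derivative of dpsi is
   (f t - f a) (3 g'^2 - 2 g g'') / (4 g^(5/2)) >= 0. *)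
Section SqrtMeanBound.

Variables (f g g1 g2 : R -> R) (a b : R).
Hypothesis Hab : a <= b.
Hypothesis Hf : forall t, a <= t <= b -> is_derive f t (g t).
Hypothesis Hg : forall t, a <= t <= b -> is_derive g t (g1 t).
Hypothesis Hg1 : forall t, a <= t <= b -> is_derive g1 t (g2 t).
Hypothesis Hgpos : forall t, a <= t <= b -> 0 < g t.
Hypothesis Hconvex : forall t, a <= t <= b -> 0 <= 3 * g1 t ^ 2 - 2 * g t * g2 t.

Let psi (t : R) : R := (f t - f a) / sqrt (g t) - (t - a) * sqrt (g a).
Let dpsi (t : R) : R :=
  sqrt (g t) - (f t - f a) * g1 t / (2 * g t * sqrt (g t)) - sqrt (g a).
Let ddpsi (t : R) : R :=
  (f t - f a) * (3 * g1 t ^ 2 - 2 * g t * g2 t) / (4 * g t ^ 2 * sqrt (g t)).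

Ltac ex_derive_side :=
  repeat match goal with
  | |- _ /\ _ => split
  | |- True => exact I
  | |- ex_derive (fun x => f x) _ => eexists; apply Hf; lra
  | |- ex_derive (fun x => g x) _ => eexists; apply Hg; lra
  | |- ex_derive (fun x => g1 x) _ => eexists; apply Hg1; lra
  end.

Ltac rewrite_derives t :=
  try replace (Derive (fun x => f x) t) with (g t)
    by (symmetry; apply is_derive_unique, Hf; lra);
  try replace (Derive (fun x => g x) t) with (g1 t)
    by (symmetry; apply is_derive_unique, Hg; lra);
  try replace (Derive (fun x => g1 x) t) with (g2 t)
    by (symmetry; apply is_derive_unique, Hg1; lra).

Lemma psi_derive (t : R) : a <= t <= b -> is_derive psi t (dpsi t).
Proof.
  intros Ht. pose proof (Hgpos t Ht) as Hgt.
  pose proof (sqrt_lt_R0 _ Hgt) as Hs. unfold psi, dpsi.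
  auto_derive; ex_derive_side; try lra.
  rewrite_derives t.
  assert (Hsq : g t = sqrt (g t) * sqrt (g t)) by (rewrite sqrt_sqrt; lra).
  set (s := sqrt (g t)) in *. clearbody s. rewrite Hsq.
  field; lra.
Qed.

Lemma dpsi_derive (t : R) : a <= t <= b -> is_derive dpsi t (ddpsi t).
Proof.
  intros Ht. pose proof (Hgpos t Ht) as Hgt.
  pose proof (sqrt_lt_R0 _ Hgt) as Hs. unfold dpsi, ddpsi.
  auto_derive; ex_derive_side; try lra.
  { apply Rgt_not_eq, Rmult_lt_0_compat; lra. }
  rewrite_derives t.
  assert (Hsq : g t = sqrt (g t) * sqrt (g t)) by (rewrite sqrt_sqrt; lra).
  set (s := sqrt (g t)) in *. clearbody s. rewrite Hsq.
  field; lra.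
Qed.

Lemma rise_nonneg (t : R) : a <= t <= b -> 0 <= f t - f a.
Proof.
  intros Ht. enough (f a <= f t) by lra.
  apply (nondecreasing_of_derive f g a t); [lra| |].
  - intros s Hs; apply Hf; lra.
  - intros s Hs; apply Rlt_le, Hgpos; lra.
Qed.

Lemma dpsi_nonneg (t : R) : a <= t <= b -> 0 <= dpsi t.
Proof.
  intros Ht. replace 0 with (dpsi a) by (unfold dpsi, Rdiv; ring).
  apply (nondecreasing_of_derive dpsi ddpsi a t); [lra| |].
  - intros s Hs; apply dpsi_derive; lra.
  - intros s Hs. pose proof (Hgpos s ltac:(lra)) as Hgs. unfold ddpsi.
    apply Rdiv_le_0_compat.
    + apply Rmult_le_pos; [apply rise_nonneg|apply Hconvex]; lra.
    + apply Rmult_lt_0_compat; [apply Rmult_lt_0_compat; [lra|apply pow_lt; lra]|].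
      apply sqrt_lt_R0, Hgs.
Qed.

Theorem sqrt_mean_bound : (b - a) * sqrt (g a) * sqrt (g b) <= f b - f a.
Proof.
  assert (Hpsi : psi a <= psi b).
  { apply (nondecreasing_of_derive psi dpsi a b Hab).
    - intros t Ht; apply psi_derive, Ht.
    - intros t Ht; apply dpsi_nonneg, Ht. }
  assert (Hsb : 0 < sqrt (g b)) by (apply sqrt_lt_R0, Hgpos; lra).
  replace (psi a) with 0 in Hpsi by (unfold psi, Rdiv; ring).
  unfold psi in Hpsi.
  apply (Rmult_le_compat_r (sqrt (g b))) in Hpsi; [|lra].
  replace (f b - f a) with ((f b - f a) / sqrt (g b) * sqrt (g b)) by (field; lra).
  lra.
Qed.

End SqrtMeanBound.

Definition entire (c : nat -> R) : Prop := CV_radius c = p_infty.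

Lemma entire_lt (c : nat -> R) (y : R) : entire c -> Rbar_lt (Rabs y) (CV_radius c).
Proof. intros H; rewrite H; exact I. Qed.

Lemma entire_ex_pseries (c : nat -> R) (y : R) : entire c -> ex_pseries c y.
Proof. intros H; apply CV_radius_inside, entire_lt, H. Qed.

Lemma entire_derive (c : nat -> R) : entire c -> entire (PS_derive c).
Proof. unfold entire; intros H; rewrite CV_radius_derive; exact H. Qed.

Lemma entire_is_derive (c : nat -> R) (y : R) :
  entire c -> is_derive (PSeries c) y (PSeries (PS_derive c) y).
Proof. intros H; apply is_derive_PSeries, entire_lt, H. Qed.

Lemma PSeries_nonneg (c : nat -> R) (y : R) :
  entire c -> (forall n, 0 <= c n) -> 0 <= y -> 0 <= PSeries c y.
Proof.
  intros Hc Hpos Hy.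
  replace 0 with (Series (fun _ => 0)).
  - apply Series_le.
    + intros n; split; [lra|]. apply Rmult_le_pos; [apply Hpos|].
      apply pow_le; exact Hy.
    + eapply ex_series_ext; [|apply (entire_ex_pseries c y Hc)].
      intros n; simpl. rewrite pow_n_pow. apply Rmult_comm.
  - rewrite (Series_ext _ (fun n => 0 * (fun _ => 0) n)) by (intros; ring).
    rewrite Series_scal_l; ring.
Qed.

Lemma PSeries_ge_head (c : nat -> R) (y : R) :
  entire c -> (forall n, 0 <= c n) -> 0 <= y -> c 0%nat <= PSeries c y.
Proof.
  intros Hc Hpos Hy. rewrite PSeries_decr_1 by (apply entire_ex_pseries, Hc).
  assert (0 <= PSeries (PS_decr_1 c) y).
  { apply PSeries_nonneg; [unfold entire; rewrite CV_radius_decr_1; exact Hc| |exact Hy].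
    intros n; apply Hpos. }
  nra.
Qed.

(* The coefficient recurrence of the series sum_n c_n y^n = 0F1(; mu; y/4):
   c_n = 4 (n+1) (n+mu) c_(n+1). *)
Definition bessel_rec (mu : R) (c : nat -> R) : Prop :=
  forall n, c n = 4 * (INR n + 1) * (INR n + mu) * c (S n).

Lemma bessel_rec_derive (mu : R) (c : nat -> R) :
  bessel_rec mu c -> bessel_rec (mu + 1) (PS_derive c).
Proof.
  intros Hc n. unfold PS_derive. rewrite (Hc (S n)), !S_INR. ring.
Qed.

Lemma PS_derive_pos (c : nat -> R) :
  (forall n, 0 < c n) -> forall n, 0 < PS_derive c n.
Proof.
  intros Hc n. apply Rmult_lt_0_compat; [apply lt_0_INR, Nat.lt_0_succ|apply Hc].
Qed.

Lemma bessel_rec_entire (mu : R) (c : nat -> R) :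
  0 < mu -> (forall n, 0 < c n) -> bessel_rec mu c -> entire c.
Proof.
  intros Hmu Hpos Hc. apply CV_radius_infinite_DAlembert.
  - intros n. specialize (Hpos n). lra.
  - apply is_lim_seq_ext with (fun n => / (4 * (INR n + 1) * (INR n + mu))).
    + intros n. pose proof (pos_INR n). pose proof (Hpos (S n)).
      rewrite (Hc n), Rabs_pos_eq; [field; lra|].
      apply Rlt_le, Rdiv_lt_0_compat; [lra|].
      rewrite <- (Hc n). apply Hpos.
    + replace (Finite 0) with (Rbar_inv p_infty) by reflexivity.
      apply is_lim_seq_inv; [|discriminate].
      apply is_lim_seq_le_p_loc with INR; [|apply is_lim_seq_INR].
      exists 0%nat. intros n _. pose proof (pos_INR n). nra.
Qed.

Lemma bessel_rec_ode (mu : R) (c : nat -> R) (y : R) :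
  entire c -> bessel_rec mu c ->
  PSeries c y / 4
  = mu * PSeries (PS_derive c) y + y * PSeries (PS_derive (PS_derive c)) y.
Proof.
  intros Hent Hc.
  rewrite <- PSeries_incr_1, <- PSeries_scal.
  replace (PSeries c y / 4) with (PSeries (PS_scal (/ 4) c) y)
    by (rewrite PSeries_scal; unfold Rdiv; apply Rmult_comm).
  rewrite <- PSeries_plus.
  2:{ apply ex_pseries_scal; [apply Rmult_comm|].
      apply entire_ex_pseries, entire_derive, Hent. }
  2:{ apply ex_pseries_incr_1, entire_ex_pseries, entire_derive, entire_derive, Hent. }
  apply PSeries_ext. intros n.
  unfold PS_plus, PS_scal, PS_incr_1, PS_derive.
  destruct n as [|k];
    change (scal (/ 4) ?u) with (/ 4 * u); change (scal mu ?u) with (mu * u);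
    rewrite ?plus_zero_r; change (plus ?u ?v) with (u + v);
    rewrite (Hc _), ?S_INR; simpl; field.
Qed.

Lemma poch_pos (nu : R) (n : nat) : -1 < nu -> 0 < poch (nu + 1) n.
Proof.
  intros H; induction n as [|n IH]; simpl; [lra|].
  apply Rmult_lt_0_compat; [exact IH|]. pose proof (pos_INR n); lra.
Qed.

Lemma Icoef_pos (nu : R) (n : nat) : -1 < nu -> 0 < Icoef nu n.
Proof.
  intros H; unfold Icoef. apply Rdiv_lt_0_compat; [apply pow_lt; lra|].
  apply Rmult_lt_0_compat; [apply poch_pos, H|apply INR_fact_lt_0].
Qed.

Lemma Icoef_rec (nu : R) : -1 < nu -> bessel_rec (nu + 1) (Icoef nu).
Proof.
  intros H n. unfold Icoef. simpl poch. rewrite fact_simpl, mult_INR, S_INR.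
  pose proof (poch_pos nu n H). pose proof (INR_fact_lt_0 n). pose proof (pos_INR n).
  simpl pow. field. repeat split; lra.
Qed.

Definition Ider (k : nat) (nu : R) : nat -> R := Nat.iter k PS_derive (Icoef nu).
Definition Iser (k : nat) (nu y : R) : R := PSeries (Ider k nu) y.

Lemma Ider_pos (k : nat) (nu : R) : -1 < nu -> forall n, 0 < Ider k nu n.
Proof.
  intros H. induction k as [|k IH]; [intros n; apply Icoef_pos, H|].
  apply PS_derive_pos, IH.
Qed.

Lemma Ider_rec (k : nat) (nu : R) : -1 < nu -> bessel_rec (nu + 1 + INR k) (Ider k nu).
Proof.
  intros H. induction k as [|k IH].
  - simpl; rewrite Rplus_0_r; apply Icoef_rec, H.
  - rewrite S_INR, <- Rplus_assoc. apply bessel_rec_derive, IH.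
Qed.

Lemma Ider_entire (k : nat) (nu : R) : -1 < nu -> entire (Ider k nu).
Proof.
  intros H. apply (bessel_rec_entire (nu + 1 + INR k)).
  - pose proof (pos_INR k); lra.
  - apply Ider_pos, H.
  - apply Ider_rec, H.
Qed.

Lemma Iser_derive (k : nat) (nu y : R) :
  -1 < nu -> is_derive (Iser k nu) y (Iser (S k) nu y).
Proof. intros H; apply entire_is_derive, Ider_entire, H. Qed.

Lemma Iser_pos (k : nat) (nu y : R) : -1 < nu -> 0 <= y -> 0 < Iser k nu y.
Proof.
  intros H Hy. apply Rlt_le_trans with (Ider k nu 0%nat); [apply Ider_pos, H|].
  apply PSeries_ge_head; [apply Ider_entire, H| |exact Hy].
  intros n; apply Rlt_le, Ider_pos, H.
Qed.

Lemma Iser_ode (k : nat) (nu y : R) : -1 < nu ->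
  Iser k nu y / 4 = (nu + 1 + INR k) * Iser (S k) nu y + y * Iser (S (S k)) nu y.
Proof. intros H; apply bessel_rec_ode; [apply Ider_entire|apply Ider_rec]; exact H. Qed.

(* The quantity that controls the main inequality: with F = Iser 0 nu,
   A = F', B = F'', one has udisc nu (x^2) = 3 g'^2 - 2 g g'' for g = d/dx I_nu
   (lemma convexity_udisc). *)
Definition udisc (nu y : R) : R :=
  let A := Iser 1 nu y in let B := Iser 2 nu y in
  12 * A ^ 2 - 8 * y * A ^ 2 + 32 * (nu + 2) * y * A * B + 48 * y ^ 2 * B ^ 2.

(* For y <= 1 the negative term is dominated by the first one. *)
Lemma udisc_pos_small (nu y : R) : -1 < nu -> 0 <= y <= 1 -> 0 < udisc nu y.
Proof.
  intros H Hy. unfold udisc.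
  pose proof (Iser_pos 1 nu y H (proj1 Hy)) as HA.
  pose proof (Iser_pos 2 nu y H (proj1 Hy)) as HB.
  set (A := Iser 1 nu y) in *. set (B := Iser 2 nu y) in *.
  assert (0 <= 32 * (nu + 2) * y * A * B) by (repeat apply Rmult_le_pos; lra).
  assert (0 <= 48 * y ^ 2 * B ^ 2) by (apply Rmult_le_pos; [nra|apply pow2_ge_0]).
  nra.
Qed.

(* The weighted quantity  z^(nu+1) A(z) udisc(z)  is increasing on (0,oo):
   by the differential equation its derivative is z^nu times a cubic form in
   A, z B with nonnegative coefficients. *)
Definition weighted_udisc (nu z : R) : R :=
  exp ((nu + 1) * ln z) * Iser 1 nu z * udisc nu z.

Lemma weighted_udisc_derive (nu z : R) : -1 < nu -> 0 < z ->
  is_derive (weighted_udisc nu) z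
    (exp ((nu + 1) * ln z) / z *
     (12 * (nu + 1) * Iser 1 nu z ^ 3 + 36 * z * Iser 1 nu z ^ 2 * Iser 2 nu z
      + 16 * (nu + 5) * z ^ 2 * Iser 1 nu z * Iser 2 nu z ^ 2
      + 48 * z ^ 3 * Iser 2 nu z ^ 3)).
Proof.
  intros H Hz. unfold weighted_udisc, udisc. auto_derive.
  - repeat split; try lra; eexists; apply Iser_derive, H.
  - rewrite !(is_derive_unique _ _ _ (Iser_derive _ nu z H)).
    pose proof (Iser_ode 1 nu z H) as Hode. simpl INR in Hode.
    set (E := exp _). set (A := Iser 1 nu z) in *. set (B := Iser 2 nu z) in *.
    set (C := Iser 3 nu z) in *. clearbody E A B C.
    assert (HC : z * C = A / 4 - (nu + 1 + 1) * B) by lra.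
    replace C with (z * C / z) by (field; lra). rewrite HC.
    field. lra.
Qed.

(* udisc is positive on [0,oo): on [0,1] directly, beyond 1 because
   weighted_udisc increases from its positive value at 1. *)
Lemma udisc_pos (nu y : R) : -1 < nu -> 0 <= y -> 0 < udisc nu y.
Proof.
  intros H Hy. destruct (Rle_lt_dec y 1) as [Hy1|Hy1]; [apply udisc_pos_small; lra|].
  assert (Hmono : weighted_udisc nu 1 <= weighted_udisc nu y).
  { eapply (nondecreasing_of_derive _ _ 1 y); [lra| |].
    - intros t Ht; apply weighted_udisc_derive; lra.
    - intros t Ht. pose proof (Iser_pos 1 nu t H ltac:(lra)).
      pose proof (Iser_pos 2 nu t H ltac:(lra)).
      apply Rmult_le_pos; [apply Rdiv_le_0_compat; [apply Rlt_le, exp_pos|lra]|].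
      repeat apply Rplus_le_le_0_compat; repeat apply Rmult_le_pos;
        try apply pow_le; lra. }
  assert (H1 : 0 < weighted_udisc nu 1).
  { unfold weighted_udisc. rewrite ln_1, Rmult_0_r, exp_0, Rmult_1_l.
    apply Rmult_lt_0_compat; [apply Iser_pos|apply udisc_pos_small]; lra. }
  assert (Hwy : 0 < weighted_udisc nu y) by lra. unfold weighted_udisc in Hwy.
  pose proof (exp_pos ((nu + 1) * ln y)). pose proof (Iser_pos 1 nu y H Hy).
  apply (Rmult_lt_reg_l (exp ((nu + 1) * ln y) * Iser 1 nu y));
    [apply Rmult_lt_0_compat; lra|lra].
Qed.

Lemma Inu_eq (nu x : R) : -1 < nu -> Inu nu x = Iser 0 nu (x ^ 2).
Proof.
  intros H.
  assert (Hcv : Un_cv (Ipartial nu x) (Iser 0 nu (x ^ 2))).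
  { pose proof (PSeries_correct (Ider 0 nu) (x ^ 2)
      (entire_ex_pseries _ _ (Ider_entire 0 nu H))) as Hser.
    apply is_series_Reals in Hser. apply is_lim_seq_Reals.
    apply is_lim_seq_ext with
      (fun N => sum_f_R0 (fun k => scal (pow_n (x ^ 2) k) (Icoef nu k)) N).
    - intros N. unfold Ipartial. apply sum_eq. intros k _.
      rewrite pow_n_pow, <- pow_mult. change (scal ?u ?v) with (u * v). ring.
    - apply is_lim_seq_Reals, Hser. }
  unfold Inu. apply (UL_sequence (Ipartial nu x)); [|exact Hcv].
  apply (epsilon_spec (inhabits 0) (fun l => Un_cv (Ipartial nu x) l)).
  exists (Iser 0 nu (x ^ 2)); exact Hcv.
Qed.

Definition dI (nu x : R) : R := 2 * x * Iser 1 nu (x ^ 2).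
Definition d2I (nu x : R) : R := 2 * Iser 1 nu (x ^ 2) + 4 * x ^ 2 * Iser 2 nu (x ^ 2).
Definition d3I (nu x : R) : R := 12 * x * Iser 2 nu (x ^ 2) + 8 * x ^ 3 * Iser 3 nu (x ^ 2).

Ltac Iser_derive_side nu H :=
  repeat match goal with
  | |- _ /\ _ => split
  | |- True => exact I
  | |- ex_derive _ _ => eexists; apply (Iser_derive _ nu _ H)
  end;
  rewrite ?(is_derive_unique _ _ _ (Iser_derive _ nu _ H)); simpl; ring.

Lemma Inu_derive (nu x : R) : -1 < nu -> is_derive (fun x => Iser 0 nu (x ^ 2)) x (dI nu x).
Proof. intros H. unfold dI. auto_derive; Iser_derive_side nu H. Qed.

Lemma dI_derive (nu x : R) : -1 < nu -> is_derive (dI nu) x (d2I nu x).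
Proof. intros H. unfold dI, d2I. auto_derive; Iser_derive_side nu H. Qed.

Lemma d2I_derive (nu x : R) : -1 < nu -> is_derive (d2I nu) x (d3I nu x).
Proof. intros H. unfold d2I, d3I. auto_derive; Iser_derive_side nu H. Qed.

Lemma dI_pos (nu x : R) : -1 < nu -> 0 < x -> 0 < dI nu x.
Proof.
  intros H Hx. unfold dI. pose proof (Iser_pos 1 nu (x ^ 2) H (pow2_ge_0 x)).
  apply Rmult_lt_0_compat; lra.
Qed.

(* The convexity quantity 3 I''^2 - 2 I' I''' of x |-> I_nu(x) is udisc (x^2),
   after eliminating the third y-derivative with the differential equation. *)
Lemma convexity_udisc (nu x : R) : -1 < nu ->
  3 * d2I nu x ^ 2 - 2 * dI nu x * d3I nu x = udisc nu (x ^ 2).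
Proof.
  intros H. pose proof (Iser_ode 1 nu (x ^ 2) H) as Hode. simpl INR in Hode.
  unfold d2I, dI, d3I, udisc.
  set (A := Iser 1 nu (x ^ 2)) in *. set (B := Iser 2 nu (x ^ 2)) in *.
  set (C := Iser 3 nu (x ^ 2)) in *. clearbody A B C.
  assert (HC : x ^ 2 * C = A / 4 - (nu + 1 + 1) * B) by lra.
  transitivity (12 * A ^ 2 + 48 * (x ^ 2) ^ 2 * B ^ 2 - 32 * x ^ 2 * A * (x ^ 2 * C));
    [ring|rewrite HC; field].
Qed.

Lemma Inu_bound_ordered (nu a b : R) : -1 < nu -> 0 < a <= b ->
  (b - a) * sqrt (dI nu a * dI nu b) <= Iser 0 nu (b ^ 2) - Iser 0 nu (a ^ 2).
Proof.
  intros H Hab.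
  rewrite sqrt_mult, <- Rmult_assoc by (apply Rlt_le, dI_pos; lra).
  apply (sqrt_mean_bound (fun x => Iser 0 nu (x ^ 2)) (dI nu) (d2I nu) (d3I nu));
    [lra|intros t _; apply Inu_derive, H|intros t _; apply dI_derive, H
    |intros t _; apply d2I_derive, H|intros t Ht; apply dI_pos; lra|].
  intros t _. rewrite convexity_udisc by exact H.
  apply Rlt_le, udisc_pos, pow2_ge_0; exact H.
Qed.

Lemma Inu_bound (nu a b : R) : -1 < nu -> 0 <= a -> 0 <= b ->
  Rabs (Iser 0 nu (a ^ 2) - Iser 0 nu (b ^ 2)) >= Rabs (a - b) * sqrt (dI nu a * dI nu b).
Proof.
  intros H Ha Hb.
  destruct (Req_dec a 0) as [->|Ha0]; [|destruct (Req_dec b 0) as [->|Hb0]].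
  1,2: replace (dI nu 0) with 0 by (unfold dI; ring);
       rewrite ?Rmult_0_r, ?Rmult_0_l, sqrt_0, Rmult_0_r; apply Rle_ge, Rabs_pos.
  assert (Hs : 0 <= sqrt (dI nu a * dI nu b)) by apply sqrt_pos.
  destruct (Rle_lt_dec a b) as [Hle|Hlt].
  - pose proof (Inu_bound_ordered nu a b H ltac:(lra)) as Hbd.
    assert (0 <= (b - a) * sqrt (dI nu a * dI nu b)) by (apply Rmult_le_pos; lra).
    rewrite (Rabs_left1 (a - b)), Rabs_left1 by lra. lra.
  - pose proof (Inu_bound_ordered nu b a H ltac:(lra)) as Hbd.
    rewrite (Rmult_comm (dI nu b)) in Hbd.
    assert (0 <= (a - b) * sqrt (dI nu a * dI nu b)) by (apply Rmult_le_pos; lra).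
    rewrite (Rabs_right (a - b)), Rabs_right by lra. lra.
Qed.

Theorem corollary1 :
  forall (nu a b da db : R),
    -1 < nu ->
    derivable_pt_lim (Inu nu) a da ->
    derivable_pt_lim (Inu nu) b db ->
    ((nu <= -1/2 /\ 0 <= a /\ 0 <= b) \/
     (0 < a < sqrt (2 * (nu + 3)) /\ 0 < b < sqrt (2 * (nu + 3)))) ->
    Rabs (Inu nu a - Inu nu b) >= Rabs (a - b) * sqrt (da * db).
Proof.
  intros nu a b da db H Hda Hdb Hcase.
  (* In both cases a, b >= 0, and the bound in fact holds for all such a, b. *)
  assert (Hab : 0 <= a /\ 0 <= b) by lra.
  assert (HI : Inu nu = fun x => Iser 0 nu (x ^ 2))
    by (apply functional_extensionality; intros x; apply Inu_eq, H).
  rewrite HI in Hda, Hdb |- *.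
  set (F := fun x => Iser 0 nu (x ^ 2)) in *.
  assert (da = dI nu a) as ->
    by (apply (uniqueness_limite F a); [exact Hda|apply is_derive_Reals, Inu_derive, H]).
  assert (db = dI nu b) as ->
    by (apply (uniqueness_limite F b); [exact Hdb|apply is_derive_Reals, Inu_derive, H]).
  apply Inu_bound; tauto.
Qed.
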